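(* (1) Every combinatorial $k$-parameter $\mathbf x=(k,S,\Lambda)$ is $\aleph_{k+1}$-free. (2) If $\mathbf x=(k,S,\Lambda,\mathbf a)$ is an abelian group $k$-parameter such that the combinatorial parameter $(k,S,\Lambda)$ is free, then $G_{\mathbf x}$ is a free abelian group.
   Context: For a set $S$, ${}^\omega S$ is the set of all functions $\omega\to S$. A combinatorial $k$-parameter is a triple $(k,S,\Lambda)$ with $k<\omega$, $S$ a set and $\Lambda\subseteq {}^{k+1}({}^\omega S)$ (sequences $\bar\eta=\langle\eta_0,\dots,\eta_k\rangle$, $\eta_\ell\in{}^\omega S$). An abelian group $k$-parameter is $\mathbf x=(k,S,\Lambda,\mathbf a)$ with $(k,S,\Lambda)$ a combinatorial $k$-parameter and $\mathbf a:\Lambda\times\omega\to\mathbb Z$, $\mathbf a_{\bar\eta,n}=\mathbf a(\bar\eta,n)$. For $\bar\eta\in\Lambda$, $m\le k$, $n<\omega$, $\bar\eta\upharpoonleft\langle m,n\rangle$ is the sequence obtained from $\bar\eta$ by replacing $\eta_m$ with $\eta_m\restriction n$. $\Lambda_m=\{\bar\eta\upharpoonleft\langle m,n\rangle:\bar\eta\in\Lambda,n<\omega\}$, $\Lambda_{\le k}=\bigcup_{m\le k}\Lambda_m$. $G_{\mathbf x}$ is the abelian group generated by $z$, $x_{\bar\nu}$ ($\bar\nu\in\Lambda_{\le k}$), $y_{\bar\eta,n}$ ($\bar\eta\in\Lambda,n<\omega$) freely except for the relations $(n!)y_{\bar\eta,n+1}=y_{\bar\eta,n}+\mathbf a_{\bar\eta,n}z+\sum_{m\le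 k}x_{\bar\eta\upharpoonleft\langle m,n\rangle}$ ($\bar\eta\in\Lambda$, $n<\omega$). A combinatorial $k$-parameter $(k,S,\Lambda)$ is free if there is an enumeration $\langle\bar\eta^\alpha:\alpha<\alpha( * )\rangle$ of $\Lambda$ such that for every $\alpha<\alpha( * )$ there are $m\le k$ and $n<\omega$ with $\bar\eta^\alpha\upharpoonleft\langle m,n\rangle\notin\{\bar\eta^\beta\upharpoonleft\langle m,n\rangle:\beta<\alpha\}$. It is $\theta$-free if $(k,S,\Lambda')$ is free for every $\Lambda'\subseteq\Lambda$ with $|\Lambda'|<\theta$. *)

From HB Require Import structures.
From mathcomp Require Import all_boot all_order all_algebra.
From Stdlib Require Import ClassicalEpsilon.
Set Implicit Arguments.
Unset Strict Implicit.
Unset Printing Implicit Defensive.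
Import GRing.Theory Num.Theory.

Definition cdec (P : Prop) : bool :=
  if excluded_middle_informative P then true else false.

Definition ind (P : Prop) : int := if cdec P then 1%R else 0%R.

Definition ktuple (S : Type) (k : nat) := 'I_k.+1 -> (nat -> S).

(* a sequence in which the coordinates are finite or infinite sequences:
   elements of Lambda_{<= k} live here *)
Definition pktuple (S : Type) (k : nat) := 'I_k.+1 -> (seq S + (nat -> S)).

Definition restr (S : Type) (k : nat) (eta : ktuple S k) (m : 'I_k.+1) (n : nat)
  : pktuple S k :=
  fun l => if l == m then inl (mkseq (eta m) n) else inr (eta l).

Definition is_wellorder (T : Type) (X : T -> Prop) (lt : T -> T -> Prop) : Prop :=
  (forall x, X x -> ~ lt x x) /\
  (forall x y z, X x -> X y -> X z -> lt x y -> lt y z -> lt x z) /\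
  (forall x y, X x -> X y -> x = y \/ lt x y \/ lt y x) /\
  well_founded (fun x y => X x /\ X y /\ lt x y).

(* (k,S,Lam) is free: there is an enumeration <eta^alpha : alpha < alpha(star)>
   of Lam, i.e. a well-ordering of Lam, such that every eta^alpha has some
   restriction eta^alpha |` <m,n> not among the eta^beta |` <m,n>, beta < alpha. *)
Definition comb_free (S : Type) (k : nat) (Lam : ktuple S k -> Prop) : Prop :=
  exists lt : ktuple S k -> ktuple S k -> Prop,
    is_wellorder Lam lt /\
    forall eta, Lam eta ->
      exists (m : 'I_k.+1) (n : nat),
        forall beta, Lam beta -> lt beta eta -> restr beta m n <> restr eta m n.

Fixpoint card_le_aleph (T : Type) (j : nat) (X : T -> Prop) : Prop :=
  match j with
  | 0 => exists f : T -> nat, forall x y, X x -> X y -> f x = f y -> x = y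
  | j'.+1 => exists lt : T -> T -> Prop, is_wellorder X lt /\
              forall x, X x -> card_le_aleph j' (fun y => X y /\ lt y x)
  end.

Definition card_lt_aleph (T : Type) (j : nat) (X : T -> Prop) : Prop :=
  match j with
  | 0 => exists s : seq T, forall x, X x -> List.In x s
  | j'.+1 => card_le_aleph j' X
  end.

Definition aleph_free (S : Type) (k : nat) (j : nat) (Lam : ktuple S k -> Prop) : Prop :=
  forall Lam' : ktuple S k -> Prop,
    (forall eta, Lam' eta -> Lam eta) -> card_lt_aleph j Lam' -> comb_free Lam'.

Inductive gen (S : Type) (k : nat) : Type :=
  | Gz : gen S k
  | Gx : pktuple S k -> gen S k
  | Gy : ktuple S k -> nat -> gen S k.
Arguments Gz {S k}.

Definition valid_gen (S : Type) (k : nat) (Lam : ktuple S k -> Prop) (g : gen S k) : Prop :=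
  match g with
  | Gz => True
  | Gx nu => exists eta m n, Lam eta /\ nu = restr eta m n
  | Gy eta _ => Lam eta
  end.

(* elements of the free abelian group F on the valid generators:
   finitely supported integer-valued functions on them *)
Definition elemF (S : Type) (k : nat) (Lam : ktuple S k -> Prop) (f : gen S k -> int) : Prop :=
  (exists s : seq (gen S k), forall g, f g <> 0%R -> List.In g s) /\
  (forall g, f g <> 0%R -> valid_gen Lam g).

Definition relator (S : Type) (k : nat) (a : ktuple S k -> nat -> int)
  (eta : ktuple S k) (n : nat) : gen S k -> int :=
  fun g => (((n`!)%:Z * ind (g = Gy eta n.+1) - ind (g = Gy eta n)
            - a eta n * ind (g = Gz))
            - \sum_(m < k.+1) ind (g = Gx (restr eta m n)))%R.

Definition inN (S : Type) (k : nat) (Lam : ktuple S k -> Prop) (a : ktuple S k -> nat -> int)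
  (f : gen S k -> int) : Prop :=
  exists l : seq (int * ({eta : ktuple S k | Lam eta} * nat)),
    f = fun g => (\sum_(p <- l) p.1 * relator a (proj1_sig p.2.1) p.2.2 g)%R.

Definition comb (S : Type) (k : nat) (I : Type) (b : I -> gen S k -> int)
  (l : seq (int * I)) : gen S k -> int :=
  fun g => (\sum_(p <- l) p.1 * b p.2 g)%R.

(* G_x = F / N is a free abelian group: there is a family (b_i)_{i in I} in F
   whose classes form a basis of F/N, i.e. they generate F/N and any integer
   combination of them lying in N has all (aggregated) coefficients zero. *)
Definition Gx_free (S : Type) (k : nat) (Lam : ktuple S k -> Prop)
  (a : ktuple S k -> nat -> int) : Prop :=
  exists (I : Type) (b : I -> gen S k -> int),
    (forall i, elemF Lam (b i)) /\
    (forall f, elemF Lam f ->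
        exists l : seq (int * I), inN Lam a (fun g => (f g - comb b l g)%R)) /\
    (forall l : seq (int * I), inN Lam a (comb b l) ->
        forall i, (\sum_(p <- l) p.1 * ind (p.2 = i))%R = 0%R).

From mathcomp Require Import all_boot all_order all_algebra zify.
From Stdlib Require Import ClassicalEpsilon FunctionalExtensionality Classical.
Set Implicit Arguments.
Unset Strict Implicit.
Unset Printing Implicit Defensive.
Import GRing.Theory Num.Theory.

(* (1) By induction on j: if Lam is well-orderable, u is a set of more than j indices and the
   u-coordinates of the members of Lam range over a set D of size at most aleph_j, then Lam has a
   free enumeration whose witnesses use indices in u.  For j = 0, enumerate by the code of one
   u-coordinate: for each eta only finitely many codes come earlier, and these are separated from
   eta by a finite initial segment.  For j + 1, well-order D with initial segments of size at most
   aleph_j and send eta to its largest u-coordinate [top eta], attained at the index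
   [top_coord eta]; enumerate by [top], then by [top_coord], and inside each block by the
   induction hypothesis for u minus [top_coord eta] and the initial segment of D up to [top eta].
   A predecessor from an earlier block already differs from eta at [top_coord eta].
   (2) Fix witnesses (m_eta, n_eta) of a free enumeration.  Then z, the y_{eta,n} with
   n >= n_eta and the x_nu not of the form eta|`<m_eta,n> with n >= n_eta form a basis of G_x.
   Along the enumeration the relator (eta, n) solves for x_{eta|`<m_eta,n>} when n >= n_eta and
   for y_{eta,n} when n < n_eta.  Conversely, in a combination of relators vanishing off the
   basis, the coefficients of the relators of the last eta die one by one, because no earlier
   relator mentions x_{eta|`<m_eta,n>}. *)

Lemma List_In_mem (T : eqType) (x : T) (s : seq T) : List.In x s <-> x \in s.
Proof.
elim: s => [//|y s IHs] /=; rewrite in_cons; split.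
  by case=> [->|/IHs ->]; rewrite ?eqxx ?orbT.
by case/orP=> [/eqP ->|/IHs]; [left|right].
Qed.

Lemma eq_bigr_In (R : nmodType) (T : Type) (s : seq T) (F G : T -> R) :
  (forall x, List.In x s -> F x = G x) -> (\sum_(x <- s) F x = \sum_(x <- s) G x)%R.
Proof.
elim: s => [|x s IHs] FG; first by rewrite !big_nil.
by rewrite !big_cons FG ?IHs //; [move=> y ys; apply: FG; right|left].
Qed.

Lemma In_has (T : Type) (P : pred T) (s : seq T) x : List.In x s -> P x -> has P s.
Proof.
elim: s => [//|y s IHs] /= [<- ->//|xs Px].
by rewrite IHs ?orbT.
Qed.

Section WellOrders.
Variable T : Type.
Implicit Types (X Y : T -> Prop) (lt : T -> T -> Prop).

Lemma wellorder_sub X Y lt :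
  is_wellorder X lt -> (forall x, Y x -> X x) -> is_wellorder Y lt.
Proof.
move=> [irr [tr [tri wf]]] YX; split; [|split; [|split]].
- by move=> x /YX; apply: irr.
- by move=> x y z /YX Hx /YX Hy /YX Hz; apply: tr.
- by move=> x y /YX Hx /YX Hy; apply: tri.
- move=> x; elim: (wf x) => {}x _ IH; constructor => y [Yy [Yx lyx]]; apply: IH.
  by split; [apply: YX|split; [apply: YX|]].
Qed.

Lemma wellorder_empty X lt : (forall x, ~ X x) -> is_wellorder X lt.
Proof.
move=> X0; split; [|split; [|split]].
- by move=> x /X0.
- by move=> x y z /X0.
- by move=> x y /X0.
- by move=> x; constructor => y [/X0].
Qed.

Lemma wellorder_single X lt p :
  (forall x, X x -> x = p) -> (forall x y, X x -> X y -> ~ lt x y) -> is_wellorder X lt.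
Proof.
move=> Xp lt0; split; [|split; [|split]].
- by move=> x Xx; apply: lt0.
- by move=> x y z Xx Xy _ /(lt0 _ _ Xx Xy).
- by move=> x y /Xp -> /Xp ->; left.
- by move=> x; constructor => y [Xy [Xx /(lt0 _ _ Xy Xx)]].
Qed.

Lemma wellorder_nat_inj X (h : T -> nat) :
  (forall x y, X x -> X y -> h x = h y -> x = y) ->
  is_wellorder X (fun x y => h x < h y).
Proof.
move=> inj_h; split; [|split; [|split]].
- by move=> x _; rewrite ltnn.
- by move=> x y z _ _ _; apply: ltn_trans.
- move=> x y Xx Xy; case: (ltngtP (h x) (h y)) => hxy; [by right; left|by right; right|].
  by left; apply: inj_h.
- suff acc n x : h x < n -> Acc (fun x y => X x /\ X y /\ h x < h y) x.
    by move=> x; apply: (acc (h x).+1).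
  elim: n x => [//|n IHn] x hx; constructor => y [_ [_ hy]].
  by apply: IHn; apply: leq_trans hy hx.
Qed.

Lemma wellorder_lex (K : Type) X (key : T -> K) (KX : K -> Prop) (R : K -> K -> Prop)
    (O : K -> T -> T -> Prop) :
  is_wellorder KX R -> (forall x, X x -> KX (key x)) ->
  (forall c, is_wellorder (fun x => X x /\ key x = c) (O c)) ->
  is_wellorder X (fun x y => R (key x) (key y) \/ key x = key y /\ O (key x) x y).
Proof.
move=> [irr [tr [tri wf]]] XK HO; split; [|split; [|split]].
- move=> x Xx [/(irr _ (XK _ Xx))//|[_]].
  by case: (HO (key x)) => irr' _; apply: irr'.
- move=> x y z Xx Xy Xz [H1|[E1 H1]] [H2|[E2 H2]].
  + by left; apply: (tr _ _ _ (XK _ Xx) (XK _ Xy) (XK _ Xz) H1 H2).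
  + by left; rewrite -E2.
  + by left; rewrite E1.
  + right; split; first by rewrite E1.
    rewrite -E1 in H2; case: (HO (key x)) => _ [tr' _].
    by apply: (tr' x y z _ _ _ H1 H2); split; rewrite // -?E2.
- move=> x y Xx Xy; case: (tri _ _ (XK _ Xx) (XK _ Xy)) => [E|[H|H]]; last 2 first.
  + by right; left; left.
  + by right; right; left.
  case: (HO (key x)) => _ [_ [tri' _]].
  case: (tri' x y (conj Xx erefl) (conj Xy (esym E))) => [->|[H|H]]; first by left.
  + by right; left; right.
  + by right; right; right; rewrite -E.
- have acc c : Acc (fun a b => KX a /\ KX b /\ R a b) c -> forall x, X x -> key x = c ->
      Acc (fun x y => X x /\ X y /\ (R (key x) (key y) \/ key x = key y /\ O (key x) x y)) x.
    elim=> {}c _ IHc x Xx Ex; case: (HO c) => _ [_ [_ wfO]].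
    elim: (wfO x) Xx Ex => {}x _ IHx Xx Ex.
    constructor => y [Xy [_ [H|[E H]]]].
    + by apply: (IHc (key y)) => //; rewrite -Ex; split; [apply: XK|split; [apply: XK|]].
    + apply: IHx => //; last by rewrite E.
      by split; [split=> //; rewrite E|split=> //; rewrite -Ex -E].
  by move=> x; constructor => y [Xy _]; apply: (acc _ (wf (key y)) y Xy erefl).
Qed.

Lemma wellorder_seq_max X lt (U : Type) (f : U -> T) (s : seq U) :
  is_wellorder X lt -> s <> [::] -> (forall x, List.In x s -> X (f x)) ->
  exists2 x, List.In x s & forall y, List.In y s -> f y = f x \/ lt (f y) (f x).
Proof.
move=> [_ [tr [tri _]]]; elim: s => [//|a [|b s] IH] _ Xs.
  by exists a; [left|move=> y [<-|[]]; left].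
have [x inx Mx] : exists2 x, List.In x (b :: s) &
    forall y, List.In y (b :: s) -> f y = f x \/ lt (f y) (f x).
  by apply: IH => // y Hy; apply: Xs; right.
have Xa : X (f a) by apply: Xs; left.
have Xx : X (f x) by apply: Xs; right.
case: (tri _ _ Xa Xx) => [E|[H|H]].
- by exists x; [right|move=> y [<-|/Mx]]; tauto.
- by exists x; [right|move=> y [<-|/Mx]]; tauto.
- exists a; [by left|move=> y [<-|Hy]]; first by left.
  right; case: (Mx y Hy) => [->//|H'].
  by apply: (tr _ _ _ _ Xx Xa H' H); apply: Xs; right.
Qed.

End WellOrders.

Lemma cdecT (P : Prop) : P -> cdec P = true.
Proof. by rewrite /cdec; case: excluded_middle_informative. Qed.

Lemma cdecF (P : Prop) : ~ P -> cdec P = false.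
Proof. by rewrite /cdec; case: excluded_middle_informative. Qed.

Lemma cdecP (P : Prop) : reflect P (cdec P).
Proof. by rewrite /cdec; case: excluded_middle_informative => H; constructor. Qed.

Lemma indT (P : Prop) : P -> ind P = 1%R.
Proof. by move=> p; rewrite /ind cdecT. Qed.

Lemma indF (P : Prop) : ~ P -> ind P = 0%R.
Proof. by move=> np; rewrite /ind cdecF. Qed.

Lemma ind_iff (P Q : Prop) : (P <-> Q) -> ind P = ind Q.
Proof.
move=> PQ; case: (classic P) => p; first by rewrite !indT //; apply/PQ.
by rewrite !indF // => /PQ.
Qed.

Lemma card_le_aleph_sub j : forall T (X Y : T -> Prop),
  card_le_aleph j X -> (forall y, Y y -> X y) -> card_le_aleph j Y.
Proof.
elim: j => [|j IHj] T X Y /=.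
  by move=> [f inj_f] YX; exists f => x y /YX Xx /YX Xy; apply: inj_f.
move=> [lt [wo_lt segs]] YX; exists lt; split; first exact: wellorder_sub wo_lt YX.
by move=> x /YX Xx; apply: (IHj _ _ _ (segs x Xx)) => y [/YX].
Qed.

Lemma card_le_aleph_empty j : forall T (X : T -> Prop),
  (forall x, ~ X x) -> card_le_aleph j X.
Proof.
elim: j => [|j IHj] T X X0 /=; first by exists (fun _ => 0) => x y /X0.
by exists (fun _ _ => False); split; [apply: wellorder_empty|move=> x /X0].
Qed.

Lemma card_le_aleph_wellorder j T (X : T -> Prop) :
  card_le_aleph j X -> exists lt, is_wellorder X lt.
Proof.
case: j => [[f inj_f]|j [lt [wo_lt _]]]; last by exists lt.
by exists (fun x y => f x < f y); apply: wellorder_nat_inj.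
Qed.

Lemma card_le_aleph_add1 j : forall T (X : T -> Prop) p,
  card_le_aleph j X -> card_le_aleph j (fun x => X x \/ x = p).
Proof.
elim: j => [|j IHj] T X p /=.
  move=> [f inj_f]; exists (fun x => if cdec (x = p) then 0 else (f x).+1).
  move=> x y Xx Xy; case: (cdecP (x = p)) => [->|xNp]; case: (cdecP (y = p)) => [->|yNp] //.
  by move=> [E]; apply: inj_f E; [case: Xx|case: Xy].
move=> [lt [wo_lt segs]].
pose key x := if cdec (x = p) then 0 else 1.
have key1 x : x <> p -> key x = 1 by move=> xNp; rewrite /key cdecF.
pose O c := if c == 0 then fun _ _ : T => False else lt.
exists (fun x y => key x < key y \/ key x = key y /\ O (key x) x y); split.
  apply: (@wellorder_lex _ nat _ key (fun _ => True) (fun a b => a < b) O).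
  - exact: (@wellorder_nat_inj nat _ id).
  - by [].
  move=> [|c]; rewrite /O /=.
    apply: (wellorder_single (p := p)); last by move=> x y _ _.
    by move=> x [_]; rewrite /key; case: cdecP.
  apply: (wellorder_sub wo_lt) => x [[//|->]].
  by rewrite /key cdecT.
move=> x Xpx; case: (classic (x = p)) => [->|xNp].
  have key0 : key p = 0 by rewrite /key cdecT.
  by apply: card_le_aleph_empty => y [_]; rewrite key0 ltn0; case=> [|[->]].
have Xx : X x by case: Xpx.
apply: (card_le_aleph_sub (IHj _ _ p (segs x Xx))) => y [Xpy].
case: (classic (y = p)) => [->|yNp]; first by right.
by rewrite !key1 //= => -[//|[_ lt_yx]]; left; split=> //; case: Xpy.
Qed.

Lemma card_le_aleph_inj j : forall (A B : Type) (X : A -> Prop) (Y : B -> Prop)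
    (g : B -> A) (i : B -> nat) (N : nat),
  card_le_aleph j X -> (forall y, Y y -> X (g y) /\ i y < N) ->
  (forall y y', Y y -> Y y' -> g y = g y' -> i y = i y' -> y = y') ->
  card_le_aleph j Y.
Proof.
elim: j => [|j IHj] A B X Y g i N /=.
  move=> [f inj_f] YX inj_gi; exists (fun y => f (g y) * N + i y) => y y' Yy Yy' E.
  have [Xy iy] := YX _ Yy; have [Xy' iy'] := YX _ Yy'.
  have Ei : i y = i y' by have := congr1 (modn^~ N) E; rewrite !modnMDl !modn_small.
  have N0 : 0 < N by apply: leq_ltn_trans iy.
  have Ef : f (g y) = f (g y').
    by have := congr1 (divn^~ N) E; rewrite !divnMDl // !divn_small // !addn0.
  by apply: inj_gi => //; apply: inj_f.
move=> [lt [wo_lt segs]] YX inj_gi.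
exists (fun y y' => lt (g y) (g y') \/ g y = g y' /\ i y < i y'); split.
  apply: (wellorder_lex (O := fun _ y y' => i y < i y') wo_lt); first by move=> y /YX [].
  move=> c; apply: wellorder_nat_inj => y y' [Yy Ey] [Yy' Ey'] E.
  by apply: inj_gi; rewrite ?Ey.
move=> y Yy; have [Xy _] := YX _ Yy.
apply: (IHj A B (fun x => (X x /\ lt x (g y)) \/ x = g y) _ g i N).
- exact: card_le_aleph_add1 (segs _ Xy).
- move=> y' [Yy' lt_y'y]; have [Xy' iy'] := YX _ Yy'; split=> //.
  by case: lt_y'y => [?|[-> _]]; [left|right].
- by move=> y1 y2 [Yy1 _] [Yy2 _]; apply: inj_gi.
Qed.

Lemma mkseq_eqP (T : Type) (x y : nat -> T) n :
  mkseq x n = mkseq y n <-> (forall t, t < n -> x t = y t).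
Proof.
split=> [E t tn|E]; last by apply/eq_in_map => t; rewrite mem_iota => /E.
have := congr1 (nth (x 0) ^~ t) E; rewrite !nth_mkseq //.
Qed.

Section Restriction.
Variables (S : Type) (k : nat).
Implicit Types (b e : ktuple S k) (l m : 'I_k.+1).

Lemma restr_eqP b e m n :
  restr b m n = restr e m n <->
  (forall l, l != m -> b l = e l) /\ (forall t, t < n -> b m t = e m t).
Proof.
split=> [E|[Eo Em]].
  split=> [l lNm|]; [have := congr1 (fun f => f l) E|have := congr1 (fun f => f m) E].
  - by rewrite /restr (negbTE lNm) => -[].
  - by rewrite /restr eqxx => -[/mkseq_eqP].
apply: functional_extensionality => l; rewrite /restr /=.
case: (eqVneq l m) => [_|lNm]; first by congr inl; apply/mkseq_eqP.
by rewrite Eo.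
Qed.

Lemma restr_inj b e m m' n n' : restr b m n = restr e m' n' -> m = m' /\ n = n'.
Proof.
move=> E; have := congr1 (fun f => f m) E; rewrite /restr eqxx.
case: eqP => [<- [/(congr1 size)]|//]; by rewrite !size_mkseq.
Qed.

Lemma restr_eq_le b e m n n' :
  n <= n' -> restr b m n' = restr e m n' -> restr b m n = restr e m n.
Proof.
move=> le_nn' /restr_eqP [Eo Em]; apply/restr_eqP; split=> // t tn.
by apply: Em; apply: leq_trans le_nn'.
Qed.

Lemma restr_eq_coord b e m n :
  restr b m n = restr e m n -> b m = e m -> b = e.
Proof.
move=> /restr_eqP [Eo _] Em; apply: functional_extensionality => l.
by case: (eqVneq l m) => [->|/Eo].
Qed.

End Restriction.

Section FreeOrderOn.
Variables (S : Type) (k : nat).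
Implicit Types (Lam : ktuple S k -> Prop) (u : {set 'I_k.+1}) (D : (nat -> S) -> Prop).

Definition free_order_on Lam u (lt : ktuple S k -> ktuple S k -> Prop) :=
  is_wellorder Lam lt /\
  forall e, Lam e -> exists m n, m \in u /\
    forall b, Lam b -> lt b e -> restr b m n <> restr e m n.

Lemma mkseq_separate D (f : (nat -> S) -> nat) y N :
  (forall x x', D x -> D x' -> f x = f x' -> x = x') ->
  exists n, forall x, D x -> f x < N -> x <> y -> mkseq x n <> mkseq y n.
Proof.
move=> inj_f; elim: N => [|N [n sep_n]]; first by exists 0.
have [t sep_t] : exists t, forall x, D x -> f x = N -> x <> y -> x t <> y t.
  case: (classic (exists x, [/\ D x, f x = N & x <> y])) => [[x0 [Dx0 fx0 x0Ny]]|none].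
    have [t x0t] : exists t, x0 t <> y t.
      by apply: not_all_ex_not => E; apply/x0Ny/functional_extensionality.
    by exists t => x Dx fx _; rewrite (inj_f x x0) // fx.
  by exists 0 => x Dx fx xNy; case: none; exists x.
exists (maxn n t.+1) => x Dx; rewrite ltnS leq_eqVlt => /orP [/eqP fx|fxN] xNy /mkseq_eqP E.
  by apply: (sep_t x Dx fx xNy); apply: E; rewrite leq_max ltnSn orbT.
by apply: (sep_n x Dx fxN xNy); apply/mkseq_eqP => t' t'n; apply: E; rewrite leq_max t'n.
Qed.

(* Enumerate by the code of the [m]-th coordinate: only finitely many codes come earlier. *)
Lemma free_order_on_countable Lam W u D m :
  is_wellorder Lam W -> m \in u -> card_le_aleph 0 D -> (forall e, Lam e -> D (e m)) ->
  exists lt, free_order_on Lam u lt.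
Proof.
move=> wo_W mu [f inj_f] De.
exists (fun b e => f (b m) < f (e m) \/ f (b m) = f (e m) /\ W b e); split.
  apply: (@wellorder_lex _ nat Lam (fun e => f (e m)) (fun _ => True) (fun a b => a < b)
    (fun _ => W)).
  - exact: (@wellorder_nat_inj nat _ id).
  - by [].
  - by move=> c; apply: (wellorder_sub wo_W) => x [].
move=> e Le; have [n sep_n] := @mkseq_separate D f (e m) (f (e m)) inj_f.
exists m, n; split=> // b Lb lt_be E_be.
have [_ /mkseq_eqP Em] := (restr_eqP b e m n).1 E_be.
case: lt_be => [lt_be|[E W_be]].
  by apply: (sep_n _ (De _ Lb) lt_be _ Em) => bm_em; rewrite bm_em ltnn in lt_be.
have bm_em : b m = e m by apply: inj_f => //; apply: De.
by case: wo_W => irr _; apply: (irr e Le); rewrite -{1}(restr_eq_coord E_be bm_em).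
Qed.

Section Step.
Variable j : nat.
Hypothesis IHj : forall Lam W u D, is_wellorder Lam W -> j < #|u| -> card_le_aleph j D ->
  (forall e, Lam e -> forall l, l \in u -> D (e l)) -> exists lt, free_order_on Lam u lt.
Variables (Lam : ktuple S k -> Prop) (W : ktuple S k -> ktuple S k -> Prop).
Variables (u : {set 'I_k.+1}) (D : (nat -> S) -> Prop) (ltD : (nat -> S) -> (nat -> S) -> Prop).
Hypotheses (wo_W : is_wellorder Lam W) (card_u : j.+1 < #|u|) (wo_D : is_wellorder D ltD).
Hypothesis segs_D : forall x, D x -> card_le_aleph j (fun y => D y /\ ltD y x).
Hypothesis coords_D : forall e, Lam e -> forall l, l \in u -> D (e l).

(* Ties go to the largest index, so that predecessors in the same [top]-class differ from [e]
   at [top_coord e]. *)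
Definition is_top_coord e l0 := [/\ l0 \in u,
  forall l, l \in u -> e l = e l0 \/ ltD (e l) (e l0) &
  forall l, l \in u -> e l = e l0 -> l <= l0].

Lemma exists_top_coord e : Lam e -> exists l0, is_top_coord e l0.
Proof.
move=> Le; have [l1 l1u max_l1] : exists2 l1, List.In l1 (enum u) &
    forall l, List.In l (enum u) -> e l = e l1 \/ ltD (e l) (e l1).
  apply: (wellorder_seq_max wo_D); first by move=> u0; move: card_u; rewrite cardE u0.
  by move=> l /List_In_mem; rewrite mem_enum; apply: coords_D.
pose P l := (l \in u) && cdec (e l = e l1).
have Pl1 : P l1 by rewrite /P -mem_enum cdecT // andbT; apply/List_In_mem.
case: (arg_maxnP (fun l : 'I_k.+1 => val l) Pl1) => l0 /andP [l0u /cdecP E0] max_l0.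
exists l0; split=> // [l lu|l lu El]; last by apply: max_l0; rewrite /P lu cdecT // El.
by rewrite E0; apply/max_l1/List_In_mem; rewrite mem_enum.
Qed.

Definition top_coord e := epsilon (inhabits ord0) (is_top_coord e).
Definition top e := e (top_coord e).

Lemma top_coordP e : Lam e -> is_top_coord e (top_coord e).
Proof. by move=> Le; apply: epsilon_spec; apply: exists_top_coord. Qed.

Lemma top_in_D e : Lam e -> D (top e).
Proof. by move=> Le; have [tu _ _] := top_coordP Le; apply: coords_D. Qed.

Definition block c l e := (Lam e /\ top e = c) /\ top_coord e = l.

Lemma block_free c l : exists lt, free_order_on (block c l) (u :\ l) lt.
Proof.
case: (classic (exists e0, block c l e0)) => [[e0 [[Le0 top_e0] l_e0]]|none]; last first.
  exists (fun _ _ => False); split; last by move=> e Be; case: none; exists e.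
  by apply: wellorder_empty => e Be; apply: none; exists e.
have Dc : D c by rewrite -top_e0; apply: top_in_D.
have lu : l \in u by rewrite -l_e0; case: (top_coordP Le0).
apply: (IHj (W := W) (D := fun x => (D x /\ ltD x c) \/ x = c)).
- by apply: (wellorder_sub wo_W) => e [[]].
- by move: card_u; rewrite (cardsD1 l u) lu.
- exact: card_le_aleph_add1 (segs_D Dc).
- move=> e [[Le top_e] _] l' /setD1P [_ l'u].
  have [_ max_e _] := top_coordP Le.
  case: (max_e l' l'u) => [->|lt_e]; first by right.
  by left; split; [apply: coords_D|rewrite -top_e].
Qed.

Definition block_order c l :=
  epsilon (inhabits (fun _ _ => False)) (free_order_on (block c l) (u :\ l)).

Lemma block_orderP c l : free_order_on (block c l) (u :\ l) (block_order c l).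
Proof. by apply: epsilon_spec; apply: block_free. Qed.

Definition step_order b e :=
  ltD (top b) (top e) \/ top b = top e /\
  (top_coord b < top_coord e \/
   top_coord b = top_coord e /\ block_order (top b) (top_coord b) b e).

Lemma step_order_wellorder : is_wellorder Lam step_order.
Proof.
have wo_ord : is_wellorder (fun _ : 'I_k.+1 => True) (fun a b => a < b).
  by apply: (@wellorder_nat_inj _ _ (@nat_of_ord _)) => a b _ _; apply: ord_inj.
apply: (@wellorder_lex _ _ Lam top D ltD (fun c x y => top_coord x < top_coord y \/
  top_coord x = top_coord y /\ block_order c (top_coord x) x y) wo_D top_in_D) => c.
apply: (@wellorder_lex _ _ (fun x => Lam x /\ top x = c) top_coord _ _ (block_order c) wo_ord).
  by [].
by move=> l; case: (block_orderP c l).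
Qed.

Lemma top_coord_sep_lt b e : Lam b -> Lam e -> ltD (top b) (top e) ->
  b (top_coord e) <> e (top_coord e).
Proof.
move=> Lb Le lt_be E; case: wo_D => irr [tr _].
have [teu _ _] := top_coordP Le; have [_ max_b _] := top_coordP Lb.
case: (max_b _ teu) => [E'|lt_eb].
  by apply: (irr _ (top_in_D Le)); move: lt_be; rewrite /top -E' E.
apply: (irr _ (top_in_D Lb)).
apply: (tr _ (top e) _ (top_in_D Lb) (top_in_D Le) (top_in_D Lb) lt_be).
by rewrite /top -E.
Qed.

Lemma top_coord_sep_eq b e : Lam b -> Lam e -> top b = top e ->
  top_coord b < top_coord e -> b (top_coord e) <> e (top_coord e).
Proof.
move=> Lb Le top_be lt_be E; have [teu _ _] := top_coordP Le.
have [_ _ last_b] := top_coordP Lb.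
by move: lt_be; rewrite ltnNge last_b // E.
Qed.

Lemma step_order_free : free_order_on Lam u step_order.
Proof.
split=> [|e Le]; first exact: step_order_wellorder.
have [_ sep] := block_orderP (top e) (top_coord e).
have [m [n [/setD1P [mNl mu] sep_mn]]] := sep e (conj (conj Le erefl) erefl).
rewrite eq_sym in mNl.
exists m, n; split=> // b Lb [lt_top|[E_top [lt_tc|[E_tc lt_be]]]].
- by move=> /restr_eqP [/(_ _ mNl) E _]; apply: top_coord_sep_lt E.
- by move=> /restr_eqP [/(_ _ mNl) E _]; apply: top_coord_sep_eq E.
- by apply: sep_mn; rewrite // -E_top -E_tc.
Qed.

End Step.

Lemma free_order_on_aleph j : forall Lam W u D,
  is_wellorder Lam W -> j < #|u| -> card_le_aleph j D ->
  (forall e, Lam e -> forall l, l \in u -> D (e l)) -> exists lt, free_order_on Lam u lt.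
Proof.
elim: j => [|j IHj] Lam W u D wo_W card_u.
  move=> card_D coords_D; have /card_gt0P [m mu] := card_u.
  by apply: (free_order_on_countable wo_W mu card_D) => e Le; apply: coords_D.
move=> [ltD [wo_D segs_D]] coords_D.
by eexists; apply: (@step_order_free j IHj Lam W u D ltD).
Qed.

End FreeOrderOn.

Lemma card_le_aleph_coords j (S : Type) (k : nat) (Lam : ktuple S k -> Prop) :
  card_le_aleph j Lam -> card_le_aleph j (fun x => exists e l, Lam e /\ e l = x).
Proof.
move=> card_Lam.
pose occ x (p : ktuple S k * 'I_k.+1) := Lam p.1 /\ p.1 p.2 = x.
pose pick x := epsilon (inhabits (fun _ => x, ord0)) (occ x).
have pickP x : (exists e l, Lam e /\ e l = x) -> occ x (pick x).
  by move=> [e [l occ_el]]; apply: epsilon_spec; exists (e, l).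
apply: (card_le_aleph_inj (g := fun x => (pick x).1) (i := fun x => val (pick x).2)
  (N := k.+1) card_Lam) => [x /pickP [Lx _]|x x' /pickP [_ Ex] /pickP [_ Ex'] /= E1 E2].
  by split=> //; apply: ltn_ord.
by rewrite -Ex -Ex' E1 (val_inj E2).
Qed.

Lemma aleph_free_succ (S : Type) (k : nat) (Lam : ktuple S k -> Prop) :
  aleph_free k.+1 Lam.
Proof.
move=> Lam' _ /= card_Lam'.
have [W wo_W] := card_le_aleph_wellorder card_Lam'.
have card_u : k < #|[set: 'I_k.+1]| by rewrite cardsT card_ord.
have [lt [wo_lt sep]] := free_order_on_aleph wo_W card_u (card_le_aleph_coords card_Lam')
  (fun e Le l _ => ex_intro _ e (ex_intro _ l (conj Le erefl))).
exists lt; split=> // e /sep [m [n [_ sep_mn]]].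
by exists m, n.
Qed.

Section GroupBasis.
Variables (S : Type) (k : nat) (Lam : ktuple S k -> Prop) (a : ktuple S k -> nat -> int).
Variable lt : ktuple S k -> ktuple S k -> Prop.
Hypothesis wo_lt : is_wellorder Lam lt.
Hypothesis free_lt : forall eta, Lam eta -> exists m n,
  forall beta, Lam beta -> lt beta eta -> restr beta m n <> restr eta m n.

Local Open Scope ring_scope.
Local Notation relators := (seq (int * ({eta : ktuple S k | Lam eta} * nat))).

Definition is_witness eta (p : 'I_k.+1 * nat) :=
  forall beta, Lam beta -> lt beta eta -> restr beta p.1 p.2 <> restr eta p.1 p.2.

Definition witness eta := epsilon (inhabits (ord0, 0%N)) (is_witness eta).
Definition wit_coord eta := (witness eta).1.
Definition wit_len eta := (witness eta).2.

Lemma witnessP eta : Lam eta -> is_witness eta (witness eta).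
Proof.
move=> Leta; apply: epsilon_spec.
by have [m [n sep]] := free_lt Leta; exists (m, n).
Qed.

(* The generators x_nu solved for by the relators whose witness they are. *)
Definition eliminated (nu : pktuple S k) :=
  exists eta, Lam eta /\ exists n, (wit_len eta <= n)%N /\ nu = restr eta (wit_coord eta) n.

Definition basic (g : gen S k) : Prop :=
  match g with
  | Gz => True
  | Gx nu => valid_gen Lam (Gx nu) /\ ~ eliminated nu
  | Gy eta n => Lam eta /\ (wit_len eta <= n)%N
  end.

Lemma eliminated_by_le e eta m n n' : Lam e -> Lam eta -> (wit_len eta <= n')%N ->
  restr e m n = restr eta (wit_coord eta) n' -> eta = e \/ lt eta e.
Proof.
move=> Le Leta le_n E; have [Em En] := restr_inj E; subst m n.
case: wo_lt => _ [_ [tri _]]; case: (tri eta e Leta Le) => [->|[]]; [by left|by right|].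
by move=> lt_e; case: (witnessP Leta Le lt_e); apply: restr_eq_le le_n E.
Qed.

Definition basis := {g : gen S k | basic g}.

Definition vec (g : gen S k) : gen S k -> int := fun h => ind (h = g).

Definition spanned (f : gen S k -> int) :=
  exists l : seq (int * basis), inN Lam a (fun g => f g - comb (fun i => vec (proj1_sig i)) l g).

Lemma inN_ext f f' : inN Lam a f -> (forall g, f g = f' g) -> inN Lam a f'.
Proof. by move=> Nf /functional_extensionality <-. Qed.

Lemma inN0 : inN Lam a (fun _ => 0).
Proof. by exists [::]; apply: functional_extensionality => g; rewrite big_nil. Qed.

Lemma inN_add f f' : inN Lam a f -> inN Lam a f' -> inN Lam a (fun g => f g + f' g).
Proof.
move=> [l ->] [l' ->]; exists (l ++ l'); apply: functional_extensionality => g.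
by rewrite big_cat.
Qed.

Lemma inN_scale c f : inN Lam a f -> inN Lam a (fun g => c * f g).
Proof.
move=> [l ->]; exists [seq (c * p.1, p.2) | p <- l].
apply: functional_extensionality => g; rewrite big_map mulr_sumr.
by apply: eq_bigr => p _ /=; rewrite mulrA.
Qed.

Lemma inN_relator eta n : Lam eta -> inN Lam a (relator a eta n).
Proof.
move=> Leta; exists [:: (1, (exist _ eta Leta, n))].
by apply: functional_extensionality => g; rewrite big_seq1 mul1r.
Qed.

Lemma spanned_ext f f' : spanned f -> (forall g, f g = f' g) -> spanned f'.
Proof. by move=> span_f /functional_extensionality <-. Qed.

Lemma spanned_inN f : inN Lam a f -> spanned f.
Proof.
by move=> Nf; exists [::]; apply: (inN_ext Nf) => g; rewrite /comb big_nil subr0.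
Qed.

Lemma spanned_basic g : basic g -> spanned (vec g).
Proof.
move=> bg; exists [:: (1, exist _ g bg)]; apply: (inN_ext inN0) => h.
by rewrite /comb big_seq1 mul1r subrr.
Qed.

Lemma comb_cat (l l' : seq (int * basis)) g :
  comb (fun i => vec (proj1_sig i)) (l ++ l') g =
  comb (fun i => vec (proj1_sig i)) l g + comb (fun i => vec (proj1_sig i)) l' g.
Proof. by rewrite /comb big_cat. Qed.

Lemma comb_scale c (l : seq (int * basis)) g :
  comb (fun i => vec (proj1_sig i)) [seq (c * p.1, p.2) | p <- l] g =
  c * comb (fun i => vec (proj1_sig i)) l g.
Proof. by rewrite /comb big_map mulr_sumr; apply: eq_bigr => p _ /=; rewrite mulrA. Qed.

Lemma spanned_add f f' : spanned f -> spanned f' -> spanned (fun g => f g + f' g).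
Proof.
move=> [l Nf] [l' Nf']; exists (l ++ l'); apply: (inN_ext (inN_add Nf Nf')) => g.
by rewrite comb_cat; lia.
Qed.

Lemma spanned_scale c f : spanned f -> spanned (fun g => c * f g).
Proof.
move=> [l Nf]; exists [seq (c * p.1, p.2) | p <- l]; apply: (inN_ext (inN_scale c Nf)) => g.
by rewrite comb_scale mulrBr.
Qed.

Lemma spanned_sub f f' : spanned f -> spanned f' -> spanned (fun g => f g - f' g).
Proof.
move=> span_f span_f'; apply: (spanned_ext (spanned_add span_f (spanned_scale (-1) span_f'))).
by move=> g; rewrite mulN1r.
Qed.

Lemma spanned_sum (J : Type) (r : seq J) (P : pred J) (F : J -> gen S k -> int) :
  (forall j, P j -> spanned (F j)) -> spanned (fun g => \sum_(j <- r | P j) F j g).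
Proof.
move=> span_F; elim: r => [|j r IHr].
  by apply: (spanned_ext (spanned_inN inN0)) => g; rewrite big_nil.
case: (boolP (P j)) => Pj.
  by apply: (spanned_ext (spanned_add (span_F j Pj) IHr)) => g; rewrite big_cons Pj.
by apply: (spanned_ext IHr) => g; rewrite big_cons (negbTE Pj).
Qed.

Lemma relatorE eta n : relator a eta n = fun g =>
  (n`!)%:Z * vec (Gy eta n.+1) g - vec (Gy eta n) g - a eta n * vec Gz g
  - \sum_(m < k.+1) vec (Gx (restr eta m n)) g.
Proof. by []. Qed.

Lemma spanned_relator_xs eta n : Lam eta ->
  spanned (vec (Gy eta n.+1)) -> spanned (vec (Gy eta n)) ->
  spanned (fun g => \sum_(m < k.+1) vec (Gx (restr eta m n)) g).
Proof.
move=> Leta span_y1 span_y0.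
have span_z : spanned (vec Gz) by apply: spanned_basic.
have := spanned_sub (spanned_sub (spanned_sub (spanned_scale (n`!)%:Z span_y1) span_y0)
  (spanned_scale (a eta n) span_z)) (spanned_inN (inN_relator n Leta)).
by move/spanned_ext; apply=> g; rewrite relatorE; lia.
Qed.

Definition gens_spanned eta :=
  (forall m n, spanned (vec (Gx (restr eta m n)))) /\ (forall n, spanned (vec (Gy eta n))).

Section SpannedStep.
Variable eta : ktuple S k.
Hypotheses (Leta : Lam eta) (IH : forall b, Lam b -> lt b eta -> gens_spanned b).

Lemma spanned_x_off_witness m n : ~ (m = wit_coord eta /\ (wit_len eta <= n)%N) ->
  spanned (vec (Gx (restr eta m n))).
Proof.
move=> off; case: (classic (eliminated (restr eta m n))) => [[b [Lb [n' [le_n' E]]]]|not_el].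
  case: (eliminated_by_le Leta Lb le_n' E) => [eq_b|lt_b].
    by subst b; case: off; have [-> ->] := restr_inj E.
  by rewrite E; apply: (IH Lb lt_b).1.
by apply: spanned_basic; split=> //; exists eta, m, n.
Qed.

Lemma spanned_x_witness n : (wit_len eta <= n)%N ->
  spanned (vec (Gx (restr eta (wit_coord eta) n))).
Proof.
move=> le_n.
have span_xs := spanned_relator_xs Leta
  (@spanned_basic (Gy eta n.+1) (conj Leta (leqW le_n)))
  (@spanned_basic (Gy eta n) (conj Leta le_n)).
have span_others : spanned (fun g =>
    \sum_(m < k.+1 | m != wit_coord eta) vec (Gx (restr eta m n)) g).
  by apply: spanned_sum => m mNw; apply: spanned_x_off_witness => -[/eqP]; rewrite (negbTE mNw).
apply: (spanned_ext (spanned_sub span_xs span_others)) => g.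
by rewrite (bigD1 (wit_coord eta)) //= addrK.
Qed.

Lemma spanned_x m n : spanned (vec (Gx (restr eta m n))).
Proof.
case: (classic (m = wit_coord eta /\ (wit_len eta <= n)%N)) => [[-> le_n]|off].
  exact: spanned_x_witness.
exact: spanned_x_off_witness.
Qed.

Lemma spanned_y_pred n : spanned (vec (Gy eta n.+1)) -> spanned (vec (Gy eta n)).
Proof.
move=> span_y1.
have span_z : spanned (vec Gz) by apply: spanned_basic.
have span_xs : spanned (fun g => \sum_(m < k.+1) vec (Gx (restr eta m n)) g).
  by apply: spanned_sum => m _; apply: spanned_x.
have := spanned_sub (spanned_sub (spanned_sub (spanned_scale (n`!)%:Z span_y1)
  (spanned_scale (a eta n) span_z)) span_xs) (spanned_inN (inN_relator n Leta)).
by move/spanned_ext; apply=> g; rewrite relatorE; lia.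
Qed.

Lemma spanned_y n : spanned (vec (Gy eta n)).
Proof.
case: (leqP (wit_len eta) n) => [le_n|lt_n]; first exact: spanned_basic.
suff down d n' : (n' + d = wit_len eta)%N -> spanned (vec (Gy eta n')).
  by apply: (down (wit_len eta - n)%N); lia.
elim: d n' => [|d IHd] n' E; first by apply: spanned_basic; split=> //; rewrite -E addn0.
by apply: spanned_y_pred; apply: IHd; lia.
Qed.

End SpannedStep.

Lemma all_gens_spanned eta : Lam eta -> gens_spanned eta.
Proof.
case: wo_lt => _ [_ [_ wf]]; elim: (wf eta) => {}eta _ IH Leta.
have IH' b : Lam b -> lt b eta -> gens_spanned b by move=> Lb lt_b; apply: IH.
by split; [apply: spanned_x IH'|apply: spanned_y IH'].
Qed.

Lemma spanned_valid g : valid_gen Lam g -> spanned (vec g).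
Proof.
case: g => [|nu|eta n] /=; first by move=> _; apply: spanned_basic.
  by move=> [eta [m [n [Leta ->]]]]; apply: (all_gens_spanned Leta).1.
by move=> Leta; apply: (all_gens_spanned Leta).2.
Qed.

Lemma spanned_elemF f : elemF Lam f -> spanned f.
Proof.
move=> [[s supp_f] valid_f]; elim: s f supp_f valid_f => [|x s IHs] f supp_f valid_f.
  apply: (spanned_ext (spanned_inN inN0)) => g.
  by case: (eqVneq (f g) 0) => [->//|/eqP /supp_f].
pose f' g := if cdec (g = x) then 0 else f g.
have span_f' : spanned f'.
  apply: IHs => g; rewrite /f'; case: cdecP => [//|gNx fg].
    by case: (supp_f g fg) => // E; case: gNx.
  exact: valid_f.
have span_fx : spanned (fun g => f x * vec x g).
  case: (eqVneq (f x) 0) => [fx0|/eqP fx].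
    by apply: (spanned_ext (spanned_inN inN0)) => g; rewrite fx0 mul0r.
  by apply: spanned_scale; apply: spanned_valid; apply: valid_f.
apply: (spanned_ext (spanned_add span_fx span_f')) => g; rewrite /f' /vec.
case: (cdecP (g = x)) => [->|gNx]; first by rewrite indT // mulr1 addr0.
by rewrite indF // mulr0 add0r.
Qed.

Definition relsum (l : relators) g :=
  \sum_(p <- l) p.1 * relator a (proj1_sig p.2.1) p.2.2 g.

Definition coef (l : relators) E n :=
  \sum_(p <- l) p.1 * ind (proj1_sig p.2.1 = E /\ p.2.2 = n).

Lemma relator_Gy eta n E n' :
  relator a eta n (Gy E n') = (n`!)%:Z * ind (eta = E /\ n.+1 = n') - ind (eta = E /\ n = n').
Proof.
rewrite /relator (@indF (Gy E n' = Gz)) // mulr0 subr0 big1 ?subr0 => [|m _]; last exact: indF.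
by congr (_ * _ - _); apply: ind_iff; split=> [[-> ->]|[-> ->]].
Qed.

(* Earlier relators cannot mention this generator: that is the witness property of E. *)
Lemma relator_Gx_witness eta n E n' : Lam E -> Lam eta -> eta = E \/ lt eta E ->
  (wit_len E <= n')%N ->
  relator a eta n (Gx (restr E (wit_coord E) n')) = - ind (eta = E /\ n = n').
Proof.
move=> LE Leta le_eta le_n'.
rewrite /relator (@indF (Gx _ = Gz)) // (@indF (Gx _ = Gy _ _)) // (@indF (Gx _ = Gy _ _)) //.
rewrite mulr0 subr0 mulr0 subr0 sub0r; congr (- _).
case: (classic (eta = E /\ n = n')) => [[-> ->]|off].
  rewrite (indT (conj erefl erefl)) (bigD1 (wit_coord E)) //= indT // big1 ?addr0 // => m mNw.
  by apply: indF => -[/restr_inj [Em _]]; rewrite Em eqxx in mNw.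
rewrite (indF off) big1 // => m _; apply: indF => -[E_restr].
have [Em En] := restr_inj E_restr; subst m n'.
case: le_eta => [eq_eta|lt_eta]; first by apply: off.
by apply: (witnessP LE Leta lt_eta); apply: restr_eq_le le_n' (esym E_restr).
Qed.

Lemma relsum_Gy_succ l E n :
  relsum l (Gy E n.+1) = (n`!)%:Z * coef l E n - coef l E n.+1.
Proof.
rewrite /relsum /coef mulr_sumr -sumrB; apply: eq_bigr => p _; rewrite relator_Gy.
rewrite (@ind_iff (_ /\ _.+1 = _) (proj1_sig p.2.1 = E /\ p.2.2 = n)); last first.
  by split=> -[-> E']; split=> //; [case: E'|rewrite E'].
case: (classic (proj1_sig p.2.1 = E /\ p.2.2 = n)) => [[_ ->]|off]; last by rewrite indF //; lia.
by lia.
Qed.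

Lemma relsum_Gy0 l E : relsum l (Gy E 0) = - coef l E 0.
Proof.
rewrite /relsum /coef -sumrN; apply: eq_bigr => p _.
by rewrite relator_Gy (@indF (_ /\ _.+1 = 0)) ?mulr0 ?sub0r ?mulrN // => -[].
Qed.

Lemma relsum_Gx_witness l E n : Lam E ->
  (forall p, List.In p l -> proj1_sig p.2.1 = E \/ lt (proj1_sig p.2.1) E) ->
  (wit_len E <= n)%N -> relsum l (Gx (restr E (wit_coord E) n)) = - coef l E n.
Proof.
move=> LE top_E le_n; rewrite /relsum /coef -sumrN; apply: eq_bigr_In => p lp.
by rewrite relator_Gx_witness ?mulrN //; [apply: proj2_sig|apply: top_E].
Qed.

(* The coefficients of the relators of the largest eta are killed one by one, at y_{E,n} below
   the witness length and at the eliminated x_{E|`<wit_coord E, n>} from there on. *)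
Lemma coef_top_eq0 l E : Lam E ->
  (forall p, List.In p l -> proj1_sig p.2.1 = E \/ lt (proj1_sig p.2.1) E) ->
  (forall g, ~ basic g -> relsum l g = 0) -> forall n, coef l E n = 0.
Proof.
move=> LE top_E vanish.
have at_x n : (wit_len E <= n)%N -> coef l E n = 0.
  move=> le_n; apply/eqP; rewrite -oppr_eq0 -(relsum_Gx_witness LE top_E le_n) vanish //.
  by case=> _; apply; exists E; split=> //; exists n.
elim=> [|n IHn].
  case: (leqP (wit_len E) 0) => [/at_x //|pos].
  by apply/eqP; rewrite -oppr_eq0 -relsum_Gy0 vanish // => -[_]; rewrite leqNgt pos.
case: (leqP (wit_len E) n.+1) => [/at_x //|lt_n].
have nb : ~ basic (Gy E n.+1) by case=> _; rewrite leqNgt lt_n.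
have := vanish _ nb; rewrite relsum_Gy_succ IHn mulr0 sub0r => /eqP.
by rewrite oppr_eq0 => /eqP.
Qed.

Lemma relsum_filter l E n : coef l E n = 0 ->
  forall g, relsum l g = relsum [seq p <- l | ~~ cdec (proj1_sig p.2.1 = E /\ p.2.2 = n)] g.
Proof.
move=> coef0 g; rewrite /relsum big_filter.
rewrite (bigID (fun p => cdec (proj1_sig p.2.1 = E /\ p.2.2 = n))) /=.
suff -> : \sum_(p <- l | cdec (proj1_sig p.2.1 = E /\ p.2.2 = n))
    p.1 * relator a (proj1_sig p.2.1) p.2.2 g = 0 by rewrite add0r.
under eq_bigr => p /cdecP [-> ->] do [].
rewrite -mulr_suml.
suff -> : \sum_(p <- l | cdec (proj1_sig p.2.1 = E /\ p.2.2 = n)) p.1 = coef l E n.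
  by rewrite coef0 mul0r.
rewrite /coef big_mkcond; apply: eq_bigr => p _.
by case: cdecP => [pEn|pNEn]; rewrite ?(indT pEn) ?(indF pNEn) ?mulr1 ?mulr0.
Qed.

Lemma relsum_eq0 l : (forall g, ~ basic g -> relsum l g = 0) -> forall g, relsum l g = 0.
Proof.
move: {2}(size l).+1 (ltnSn (size l)) => N; elim: N l => [//|N IHN] [|p0 l0] size_l vanish g.
  by rewrite /relsum big_nil.
set l := p0 :: l0 in size_l vanish *.
have l_nil : l <> [::] by [].
have [p lp top_p] := @wellorder_seq_max _ Lam lt _ (fun p => proj1_sig p.2.1) l wo_lt l_nil
  (fun p _ => proj2_sig p.2.1).
have coef0 := coef_top_eq0 (proj2_sig p.2.1) top_p vanish p.2.2.
rewrite (relsum_filter coef0); apply: IHN => [|g' ng']; last first.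
  by rewrite -(relsum_filter coef0); apply: vanish.
pose keep (q : int * ({eta : ktuple S k | Lam eta} * nat)) :=
  ~~ cdec (proj1_sig q.2.1 = proj1_sig p.2.1 /\ q.2.2 = p.2.2).
have : has (predC keep) l by apply: (In_has lp); rewrite /= negbK cdecT.
rewrite has_count size_filter -/keep; move: size_l; rewrite -(count_predC keep l); lia.
Qed.

Lemma basis_inj (i j : basis) : proj1_sig i = proj1_sig j -> i = j.
Proof.
case: i j => [g bg] [h bh] /= E; subst h.
by rewrite (proof_irrelevance _ bg bh).
Qed.

Lemma basic_valid g : basic g -> valid_gen Lam g.
Proof. by case: g => //= [nu []|eta n []]. Qed.

Lemma elemF_vec g : valid_gen Lam g -> elemF Lam (vec g).
Proof.
rewrite /vec => vg; split.
  by exists [:: g] => h; case: (classic (h = g)) => [->|hNg]; [left|rewrite indF].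
by move=> h; case: (classic (h = g)) => [->//|hNg]; rewrite indF.
Qed.

Lemma basis_independent (l : seq (int * basis)) :
  inN Lam a (comb (fun i => vec (proj1_sig i)) l) ->
  forall i, \sum_(p <- l) p.1 * ind (p.2 = i) = 0.
Proof.
move=> [l' comb_l] i.
have vanish g : ~ basic g -> relsum l' g = 0.
  move=> ng; rewrite /relsum -(congr1 (fun F => F g) comb_l) /comb big1 // => p _.
  by rewrite /vec indF ?mulr0 // => E; apply: ng; rewrite E; apply: proj2_sig.
have := relsum_eq0 vanish (proj1_sig i).
rewrite /relsum -(congr1 (fun F => F (proj1_sig i)) comb_l) /comb /vec => coef_i.
apply: etrans coef_i; apply: eq_bigr => p _; congr (_ * _).
by apply: ind_iff; split=> [->//|/esym /basis_inj].
Qed.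

Lemma Gx_free_of_order : Gx_free Lam a.
Proof.
exists basis, (fun i => vec (proj1_sig i)); split; [|split].
- by move=> [g bg]; apply/elemF_vec/basic_valid.
- by move=> f /spanned_elemF.
- exact: basis_independent.
Qed.

End GroupBasis.

Theorem claim1p13 :
  (forall (k : nat) (Sy : Type) (Lam : ktuple Sy k -> Prop),
      aleph_free k.+1 Lam) /\
  (forall (k : nat) (Sy : Type) (Lam : ktuple Sy k -> Prop)
          (a : ktuple Sy k -> nat -> int),
      comb_free Lam -> Gx_free Lam a).
Proof.
split=> [k Sy Lam|k Sy Lam a [lt [wo_lt free_lt]]]; first exact: aleph_free_succ.
exact: Gx_free_of_order wo_lt free_lt.
Qed.
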